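(* Let $\mathbb{K}$ be a field, $k\ge 1$, and let $\mathcal{C}\subseteq\mathbb{K}^{2k}$ be an indecomposable self-dual code. Then $\dim_{\mathbb{K}}(\mathcal{C}^{(2)})=2k-1$.
   Context: A linear code of length $n$ over $\mathbb{K}$ is a $\mathbb{K}$-subspace $\mathcal{C}\subseteq\mathbb{K}^n$; it is self-dual if $\mathcal{C}=\mathcal{C}^\perp$ with respect to the standard bilinear form $\sum_i x_iy_i$. The Schur (componentwise) product of $v,w\in\mathbb{K}^n$ is $v\ast w=(v_1w_1,\dots,v_nw_n)$, and $\mathcal{C}^{(2)}$ is the $\mathbb{K}$-span of all $c\ast c'$, $c,c'\in\mathcal{C}$. Two codes are equivalent if one is obtained from the other by a permutation of coordinates. A code is decomposable if it is equivalent to a direct sum $\mathcal{C}_1\oplus\mathcal{C}_2=\{(c_1,c_2):c_i\in\mathcal{C}_i\}$ of two nontrivial (nonzero, positive-length) codes, and indecomposable otherwise. *)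

From HB Require Import structures.
From mathcomp Require Import all_boot all_order all_algebra all_fingroup.
Set Implicit Arguments. Unset Strict Implicit. Unset Printing Implicit Defensive.
Import GRing.Theory.
Local Open Scope ring_scope.

Definition dotv (K : fieldType) (n : nat) (x y : 'rV[K]_n) : K :=
  \sum_(i < n) x 0 i * y 0 i.

Definition self_dual (K : fieldType) (n : nat) (C : {vspace 'rV[K]_n}) : Prop :=
  forall v : 'rV[K]_n, v \in C <-> (forall c : 'rV[K]_n, c \in C -> dotv v c = 0).

Definition schur (K : fieldType) (n : nat) (v w : 'rV[K]_n) : 'rV[K]_n :=
  \row_i (v 0 i * w 0 i).

(* C^(2): the span of all c * c' with c, c' in C.  By bilinearity of the
   Schur product this is the span of the products of basis vectors. *)
Definition schur_square (K : fieldType) (n : nat) (C : {vspace 'rV[K]_n})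
  : {vspace 'rV[K]_n} :=
  <<[seq schur c c' | c <- vbasis C, c' <- vbasis C]>>%VS.

(* C is decomposable: after a permutation s of the coordinates, C is the direct
   sum C1 (+) C2 of two nonzero codes of positive lengths n1, n2 (n1 + n2 = n). *)
Definition perm_vec (K : fieldType) (n n1 n2 : nat) (e : (n1 + n2)%N = n)
  (s : 'S_n) (w : 'rV[K]_(n1 + n2)) : 'rV[K]_n :=
  \row_i w 0 (cast_ord (esym e) (s i)).

Definition decomposable (K : fieldType) (n : nat) (C : {vspace 'rV[K]_n}) : Prop :=
  exists n1 n2 : nat, exists e : (n1 + n2)%N = n, exists s : 'S_n,
  exists C1 : {vspace 'rV[K]_n1}, exists C2 : {vspace 'rV[K]_n2},
    [/\ (0 < n1)%N, (0 < n2)%N, C1 != 0%VS, C2 != 0%VS &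
     forall w : 'rV[K]_(n1 + n2),
       perm_vec e s w \in C <-> (lsubmx w \in C1 /\ rsubmx w \in C2)].

Definition indecomposable (K : fieldType) (n : nat) (C : {vspace 'rV[K]_n}) : Prop :=
  ~ decomposable C.

(* Since C is self-dual, each Schur product c * c' has coordinate sum c . c' = 0, so
   C^(2) lies in the hyperplane orthogonal to the all-one vector. Conversely v is
   orthogonal to C^(2) iff v * C is orthogonal to C, i.e. iff v * C <= C. Such v form
   an algebra under the Schur product, so by Lagrange interpolation it contains the
   indicator e of every level set of v. If v were not constant, e would be a proper
   idempotent and C = e C (+) (1 - e) C would be a decomposition. Hence the orthogonal
   of C^(2) is the line of constant vectors and dim C^(2) = n - 1. *)

From HB Require Import structures.
From mathcomp Require Import all_boot all_order all_algebra all_fingroup.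
Set Implicit Arguments. Unset Strict Implicit. Unset Printing Implicit Defensive.
Import GRing.Theory.
Local Open Scope ring_scope.

Section SchurDot.
Variables (K : fieldType) (n : nat).
Implicit Types (u x y : 'rV[K]_n) (C : {vspace 'rV[K]_n}).

Lemma schurC : commutative (@schur K n).
Proof. by move=> x y; apply/rowP=> i; rewrite !mxE mulrC. Qed.

Lemma schurA : associative (@schur K n).
Proof. by move=> x y z; apply/rowP=> i; rewrite !mxE mulrA. Qed.

Lemma schur1x x : schur (const_mx 1) x = x.
Proof. by apply/rowP=> i; rewrite !mxE mul1r. Qed.

Fact schur_is_linear x : linear (schur x).
Proof. by move=> a y z; apply/rowP=> i; rewrite !mxE mulrDr mulrCA. Qed.

HB.instance Definition _ x := GRing.isSemilinear.Build K 'rV[K]_n 'rV[K]_n _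
  (schur x) (GRing.semilinear_linear (schur_is_linear x)).

Lemma dotvC x y : dotv x y = dotv y x.
Proof. by apply: eq_bigr => i _; rewrite mulrC. Qed.

Fact dotv_is_scalar x : scalar (dotv x).
Proof.
move=> a y z; rewrite /dotv mulr_sumr -big_split.
by apply: eq_bigr => i _; rewrite !mxE mulrDr mulrCA.
Qed.

HB.instance Definition _ x := GRing.isSemilinear.Build K 'rV[K]_n K _
  (dotv x) (GRing.semilinear_linear (dotv_is_scalar x)).

Lemma dotv_schurl u x y : dotv (schur u x) y = dotv u (schur x y).
Proof. by apply: eq_bigr => i _; rewrite !mxE mulrA. Qed.

Lemma dotv_deltal (i : 'I_n) x : dotv (delta_mx 0 i) x = x 0 i.
Proof.
rewrite /dotv (bigD1 i) //= !mxE !eqxx mul1r big1 ?addr0 // => j /negbTE nji.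
by rewrite mxE nji andbF mul0r.
Qed.

Lemma dotv_span (X : seq 'rV[K]_n) u :
  {in X, forall x, dotv u x = 0} -> {in <<X>>%VS, forall x, dotv u x = 0}.
Proof.
move=> uX x Xx; rewrite (@coord_span _ _ _ (in_tuple X) _ Xx) linear_sum big1 // => i _.
by rewrite linearZ /= uX ?mulr0 // mem_nth ?size_tuple.
Qed.

Lemma schur_in_square C x y : x \in C -> y \in C -> schur x y \in schur_square C.
Proof.
move=> Cx Cy; rewrite (coord_vbasis Cx) schurC linear_sum; apply: memv_suml => i _.
rewrite linearZ /= memvZ // (coord_vbasis Cy) schurC linear_sum; apply: memv_suml => j _.
by rewrite linearZ memvZ // memv_span // allpairs_f // mem_nth ?size_tuple.
Qed.

End SchurDot.

Definition stabilizes (K : fieldType) (n : nat) (C : {vspace 'rV[K]_n}) (v : 'rV[K]_n) :=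
  {in C, forall c, schur v c \in C}.

Section Stabilizer.
Variables (K : fieldType) (n : nat) (C : {vspace 'rV[K]_n}).
Implicit Types (u v : 'rV[K]_n).

Lemma stabilizes1 : stabilizes C (const_mx 1).
Proof. by move=> c Cc; rewrite schur1x. Qed.

Lemma stabilizes_schur u v : stabilizes C u -> stabilizes C v -> stabilizes C (schur u v).
Proof. by move=> Cu Cv c Cc; rewrite -schurA Cu ?Cv. Qed.

Lemma stabilizes_affine (a b : K) v :
  stabilizes C v -> stabilizes C (\row_l (a * v 0 l + b)).
Proof.
move=> Cv c Cc; have -> : schur (\row_l (a * v 0 l + b)) c = a *: schur v c + b *: c.
  by apply/rowP=> l; rewrite !mxE mulrDl mulrA.
by rewrite memvD ?memvZ ?Cv.
Qed.

Lemma stabilizes_prod (I : Type) (r : seq I) (P : pred I) (F : I -> 'I_n -> K) :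
  (forall m, P m -> stabilizes C (\row_l F m l)) ->
  stabilizes C (\row_l \prod_(m <- r | P m) F m l).
Proof.
move=> CF; elim: r => [|m r IHr].
  have -> : \row_l \prod_(j <- [::] | P j) F j l = const_mx 1.
    by apply/rowP=> l; rewrite !mxE big_nil.
  exact: stabilizes1.
have -> : \row_l \prod_(j <- m :: r | P j) F j l =
    schur (if P m then \row_l F m l else const_mx 1) (\row_l \prod_(j <- r | P j) F j l).
  by apply/rowP=> l; rewrite !mxE big_cons; case: (P m); rewrite !mxE ?mul1r.
by apply: stabilizes_schur IHr; case: ifP => [/CF|_]; last exact: stabilizes1.
Qed.

(* Lagrange interpolation: the indicator of [v = a] is a product of affine functions of v. *)
Lemma stabilizes_level_set v (a : K) :
  stabilizes C v -> stabilizes C (\row_l (v 0 l == a)%:R).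
Proof.
move=> Cv; have -> : \row_l (v 0 l == a)%:R =
    \row_l \prod_(m <- index_enum 'I_n | v 0 m != a) ((v 0 l - v 0 m) / (a - v 0 m)).
  apply/rowP=> l; rewrite !mxE; have [->|vla] := eqVneq (v 0 l) a.
    by rewrite big1 // => m am; rewrite divff // subr_eq0 eq_sym.
  by rewrite (bigD1 l) //= subrr !mul0r.
apply: stabilizes_prod => m _.
rewrite (_ : \row_l _ = \row_l ((a - v 0 m)^-1 * v 0 l + - (v 0 m / (a - v 0 m)))).
  exact: stabilizes_affine.
by apply/rowP=> l; rewrite !mxE mulrBl mulrC.
Qed.

End Stabilizer.

Lemma perm_to_front n (A : {set 'I_n}) : exists s : 'S_n, forall i, (s i < #|A|)%N = (i \in A).
Proof.
pose L := enum A ++ enum (~: A).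
have inL i : i \in L by rewrite mem_cat !mem_enum in_setC orbN.
have sizeL : size L = n by rewrite size_cat -!cardE cardsC card_ord.
have ltL i : (index i L < n)%N by rewrite -[X in (_ < X)%N]sizeL index_mem.
have inj_index : injective (fun i => Ordinal (ltL i)).
  by move=> i j [] eq_ij; rewrite -(nth_index i (inL i)) eq_ij nth_index.
exists (perm inj_index) => i; rewrite permE /= index_cat mem_enum cardE.
by case: ifP => Ai; rewrite ?index_mem ?mem_enum ?Ai // ltnNge leq_addr.
Qed.

Section Decomposition.
Variables (K : fieldType) (n : nat) (A : {set 'I_n}) (s : 'S_n).
Hypothesis sA : forall i, (s i < #|A|)%N = (i \in A).

Let nA : (#|A| + #|~: A|)%N = n := etrans (cardsC A) (card_ord n).
Local Notation e := (\row_l (l \in A)%:R : 'rV[K]_n).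
Local Notation unperm := (colsub (fun j => (s^-1)%g (cast_ord nA j)) : 'rV[K]_n -> _).

Lemma perm_vecK : cancel unperm (perm_vec nA s).
Proof. by move=> v; apply/rowP=> i; rewrite !mxE cast_ordKV permK. Qed.

Lemma unpermK : cancel (perm_vec nA s) unperm.
Proof. by move=> w; apply/rowP=> j; rewrite !mxE permKV cast_ordK. Qed.

Lemma mem_unperm j : ((s^-1)%g (cast_ord nA j) \in A) = (j < #|A|)%N.
Proof. by rewrite -sA permKV. Qed.

Lemma unperm_schur_indicator x : unperm (schur e x) = row_mx (lsubmx (unperm x)) 0.
Proof.
rewrite -[LHS]hsubmxK; congr row_mx; apply/rowP=> j; rewrite !mxE mem_unperm /=.
  by rewrite ltn_ord mul1r.
by rewrite ltnNge leq_addr mul0r.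
Qed.

Lemma unperm_schur_coindicator x : unperm (x - schur e x) = row_mx 0 (rsubmx (unperm x)).
Proof.
by rewrite linearB /= unperm_schur_indicator -{1}[unperm x]hsubmxK opp_row_mx add_row_mx
  subrr oppr0 addr0.
Qed.

Lemma decomposable_of_indicator (C : {vspace 'rV[K]_n}) (i0 i1 : 'I_n) :
  (forall i, ~ {in C, forall c : 'rV_n, c 0 i = 0}) -> i0 \in A -> i1 \notin A ->
  stabilizes C e -> decomposable C.
Proof.
move=> suppC Ai0 Ai1 Ce; pose C1 := (linfun (lsubmx \o unperm) @: C)%VS.
pose C2 := (linfun (rsubmx \o unperm) @: C)%VS.
have unperm_eq0 x : unperm x = 0 -> x = 0.
  by move/(congr1 (perm_vec nA s)); rewrite perm_vecK => ->; apply/rowP=> i; rewrite !mxE.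
exists #|A|, #|~: A|, nA, s, C1, C2; split.
- by apply/card_gt0P; exists i0.
- by apply/card_gt0P; exists i1; rewrite inE.
- apply/eqP=> C1_0; apply: (suppC i0) => c Cc.
  have := memv_img (linfun (lsubmx \o unperm)) Cc.
  rewrite -/C1 C1_0 memv0 lfunE /= => /eqP c1_0.
  have := unperm_schur_indicator c; rewrite c1_0 row_mx0 => /unperm_eq0/rowP/(_ i0).
  by rewrite !mxE Ai0 mul1r.
- apply/eqP=> C2_0; apply: (suppC i1) => c Cc.
  have := memv_img (linfun (rsubmx \o unperm)) Cc.
  rewrite -/C2 C2_0 memv0 lfunE /= => /eqP c2_0.
  have := unperm_schur_coindicator c; rewrite c2_0 row_mx0 => /unperm_eq0/rowP/(_ i1).
  by rewrite !mxE (negbTE Ai1) mul0r subr0.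
move=> w; split=> [Cw | [/memv_imgP[c1 Cc1 w1] /memv_imgP[c2 Cc2 w2]]].
  have := memv_img (linfun (lsubmx \o unperm)) Cw.
  have := memv_img (linfun (rsubmx \o unperm)) Cw.
  by rewrite !lfunE /= unpermK.
rewrite !lfunE /= in w1 w2.
have -> : w = unperm (schur e c1 + (c2 - schur e c2)).
  rewrite linearD /= unperm_schur_indicator unperm_schur_coindicator add_row_mx.
  by rewrite addr0 add0r -w1 -w2 hsubmxK.
by rewrite perm_vecK memvD ?memvB ?Ce.
Qed.

End Decomposition.

Lemma dimv_rV (K : fieldType) (n : nat) : \dim (fullv : {vspace 'rV[K]_n}) = n.
Proof. by rewrite dimvf /dim /= mul1n. Qed.

Section SelfDual.
Variables (K : fieldType) (n : nat).
Implicit Types (C S W : {vspace 'rV[K]_n}) (u v : 'rV[K]_n).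

Lemma self_dual_coord_support C :
  self_dual C -> forall i, ~ {in C, forall c : 'rV_n, c 0 i = 0}.
Proof.
move=> SD i Ci0; have : delta_mx 0 i \in C by apply/SD => c Cc; rewrite dotv_deltal Ci0.
by move/Ci0/eqP; rewrite mxE !eqxx oner_eq0.
Qed.

Lemma stabilizes_const C v :
  (forall i, ~ {in C, forall c : 'rV_n, c 0 i = 0}) -> indecomposable C ->
  stabilizes C v -> forall i j, v 0 i = v 0 j.
Proof.
move=> suppC indC Cv i j; apply/eqP/negPn/negP => vij; apply: indC.
pose A := [set l | v 0 l == v 0 i]; have [s sA] := perm_to_front A.
apply: (decomposable_of_indicator sA (i0 := i) (i1 := j) suppC).
- by rewrite inE.
- by rewrite inE eq_sym.
rewrite (_ : \row_l _ = \row_l (v 0 l == v 0 i)%:R); first exact: stabilizes_level_set.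
by apply/rowP=> l; rewrite !mxE inE.
Qed.

Lemma stabilizes_of_orthogonal C v :
  self_dual C -> {in schur_square C, forall x, dotv v x = 0} -> stabilizes C v.
Proof. by move=> SD vC2 c Cc; apply/SD => d Cd; rewrite dotv_schurl vC2 ?schur_in_square. Qed.

Lemma schur_square_orthogonal1 C :
  self_dual C -> {in schur_square C, forall x, dotv (const_mx 1) x = 0}.
Proof.
move=> SD; apply: dotv_span => _ /allpairsP[[b b'] [/vbasis_mem Cb /vbasis_mem Cb' ->]].
by rewrite -dotv_schurl schur1x; apply: (SD b).1.
Qed.

Lemma dimv_lt_orthogonal S u x0 :
  dotv u x0 != 0 -> {in S, forall x, dotv u x = 0} -> (\dim S < n)%N.
Proof.
move=> ux0 uS; rewrite -[X in (_ < X)%N](dimv_rV K) (ltn_leqif (dimv_leqif_eq (subvf S))).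
by apply: contra ux0 => /eqP Sfull; rewrite uS ?Sfull ?memvf.
Qed.

Lemma dimv_orthogonal_ge S W :
  (forall v, {in S, forall x, dotv v x = 0} -> v \in W) -> (n <= \dim S + \dim W)%N.
Proof.
move=> orthW; pose M := \matrix_(i < n, j < \dim S) tnth (vbasis S) j 0 i.
pose phi := linfun (mulmxr M : 'rV[K]_n -> 'rV[K]_(\dim S)).
have kerW : (lker phi <= W)%VS.
  apply/subvP => v; rewrite memv_ker lfunE /= => /eqP vM0; apply: orthW.
  rewrite -(span_basis (vbasisP S)); apply: dotv_span => _ /tnthP[j ->].
  by move/rowP: vM0 => /(_ j); rewrite !mxE => <-; apply: eq_bigr => i _; rewrite mxE.
have := limg_ker_dim phi fullv; rewrite capfv dimv_rV => dim_n.
rewrite -[X in (X <= _)%N]dim_n addnC leq_add ?dimvS //.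
by rewrite -[X in (_ <= X)%N](dimv_rV K) dimvS ?subvf.
Qed.

End SelfDual.

Theorem dim_schur_square_self_dual (K : fieldType) (n : nat) (C : {vspace 'rV[K]_n}) :
  (0 < n)%N -> self_dual C -> indecomposable C -> \dim (schur_square C) = n.-1.
Proof.
move=> n_gt0 SD indC; pose i0 := Ordinal n_gt0.
have lt_n : (\dim (schur_square C) < n)%N.
  apply: (dimv_lt_orthogonal (x0 := delta_mx 0 i0) _ (schur_square_orthogonal1 SD)).
  by rewrite dotvC dotv_deltal mxE oner_eq0.
have one_neq0 : const_mx 1 != 0 :> 'rV[K]_n.
  by apply/eqP=> /rowP/(_ i0)/eqP; rewrite !mxE oner_eq0.
have : (n <= \dim (schur_square C) + \dim <[const_mx 1%R : 'rV[K]_n]>)%N.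
  apply: dimv_orthogonal_ge => v /(stabilizes_of_orthogonal SD) Cv.
  have v_const := stabilizes_const (self_dual_coord_support SD) indC Cv.
  rewrite (_ : v = v 0 i0 *: const_mx 1) ?memvZ ?memv_line //.
  by apply/rowP=> i; rewrite !mxE mulr1 (v_const i i0).
rewrite dim_vline one_neq0 addn1 => le_n.
by apply/eqP; rewrite -eqSS prednK // eqn_leq lt_n le_n.
Qed.

Unset Implicit Arguments.

Theorem mainTheorem2 (K : fieldType) (k : nat) (C : {vspace 'rV[K]_(2 * k)}) :
  (1 <= k)%N -> self_dual C -> indecomposable C ->
  \dim (schur_square C) = (2 * k - 1)%N.
Proof.
by move=> k_gt0 SD indC; rewrite subn1 dim_schur_square_self_dual // muln_gt0.
Qed.
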